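(* Let $a\le b$ be integers and $i\in[a,b]$. Then in $\mathcal{K}$ $$[b-a+2]_q\,u_i\,u_{[a,b]}=q^{\,i-a+1}[b-i+1]_q\,u_{[a-1,b]}+[i-a+1]_q\,u_{[a,b+1]}.$$ Moreover, this identity is a consequence of the defining relations $(q+1)u_j^2=qu_ju_{j-1}+u_ju_{j+1}$ for $j=a,a+1,\dots,b$ only.
   Context: Let $\mathbf{k}$ be a field of characteristic zero and $q\in\mathbf{k}$ an element that is not a nontrivial root of unity (so $[m]_q\ne 0$ for $m\ge 1$). Notation: $[m]_q=1+q+\dots+q^{m-1}$, $[m]_q!=\prod_{i=1}^m[i]_q$, $\binom{m}{k}_q=[m]_q!/([k]_q![m-k]_q!)$, and $[a,b]=\{a,a+1,\dots,b\}$. The Klyachko algebra $\mathcal{K}$ is the commutative $\mathbf{k}$-algebra generated by $u_i$, $i\in\mathbb{Z}$, subject to the relations $(q+1)u_i^2=qu_iu_{i-1}+u_iu_{i+1}$ for all $i\in\mathbb{Z}$. For a finite set $I\subset\mathbb{Z}$, $u_I=\prod_{i\in I}u_i$. *)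

From mathcomp Require Import all_boot all_order all_algebra.
Set Implicit Arguments. Unset Strict Implicit. Unset Printing Implicit Defensive.
Import GRing.Theory.
Local Open Scope ring_scope.

Definition qint (R : nzRingType) (q : R) (m : nat) : R := \sum_(k < m) q ^+ k.

Definition uI (R : nzRingType) (u : int -> R) (a b : int) : R :=
  \prod_(k < `|(b - a + 1)%R|%N) u (a + k%:Z).

Definition klyachko_rel (k : fieldType) (A : comAlgType k) (q : k) (u : int -> A) (j : int) : Prop :=
  (q + 1) *: (u j ^+ 2) = q *: (u j * u (j - 1)) + u j * u (j + 1).

From mathcomp Require Import all_boot all_order all_algebra.
From mathcomp Require Import zify.
Import GRing.Theory.
Local Open Scope ring_scope.

(* Write b = a + n and i = a + m, and let P = u_{[a,b]}.  The vectors
   x_t = P * u_{a+t-1}  (t = 0, ..., n+2)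
   satisfy x_0 = u_{[a-1,b]}, x_{n+2} = u_{[a,b+1]} and x_{m+1} = u_i P.
   Multiplying the Klyachko relation at j = a+t by the remaining factors of
   P turns it into the linear recurrence (q+1) x_{t+1} = q x_t + x_{t+2}
   for t <= n, whose solutions are "q-affine": x_t = x_0 + [t]_q (x_1 - x_0).
   The theorem is then the three-point identity
   [n+2] x_{m+1} = q^{m+1} [n-m+1] x_0 + [m+1] x_{n+2}
   for q-affine sequences, which reduces to [n+2] = [m+1] + q^{m+1}[n-m+1].
   Only the relations at j = a, ..., b are used, and no hypothesis on q or on
   the characteristic is needed. *)

Lemma qintS (R : nzRingType) (q : R) (t : nat) : qint q t.+1 = qint q t + q ^+ t.
Proof. by rewrite /qint big_ord_recr. Qed.

Lemma qintD (R : nzRingType) (q : R) (p r : nat) :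
  qint q (p + r) = qint q p + q ^+ p * qint q r.
Proof.
elim: r => [|r IH]; first by rewrite addn0 /qint big_ord0 mulr0 addr0.
by rewrite addnS !qintS IH mulrDr -exprD addrA.
Qed.

Section QAffine.
Variables (R : nzRingType) (V : lmodType R) (q : R) (x : nat -> V) (n : nat).

Hypothesis rec : forall t, (t <= n)%N -> (q + 1) *: x t.+1 = q *: x t + x t.+2.

Lemma qaffine_diff (t : nat) : (t <= n.+1)%N -> x t.+1 - x t = q ^+ t *: (x 1%N - x 0%N).
Proof.
elim: t => [|t IH] ht; first by rewrite scale1r.
have -> : x t.+2 = (q + 1) *: x t.+1 - q *: x t.
  by rewrite rec; [rewrite addrC addKr | lia].
rewrite exprS -scalerA -IH; last lia.
by rewrite scalerDl scale1r scalerBr addrAC addrK.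
Qed.

Lemma qaffine_closed (t : nat) : (t <= n.+2)%N -> x t = x 0%N + qint q t *: (x 1%N - x 0%N).
Proof.
elim: t => [|t IH] ht; first by rewrite /qint big_ord0 scale0r addr0.
rewrite qintS scalerDl addrA -IH; last lia.
by rewrite -qaffine_diff; [rewrite addrC subrK | lia].
Qed.

End QAffine.

(* The three-point identity for a q-affine sequence y_t = y_0 + [t] d,
   evaluated at t = 0, m+1 and m+r+2; it amounts to qintD. *)
Lemma qaffine_three_point (R : comNzRingType) (V : lmodType R) (q : R)
    (y : nat -> V) (d : V) (m r : nat) :
  (forall t, (t <= m.+1 + r.+1)%N -> y t = y 0%N + qint q t *: d) ->
  qint q (m.+1 + r.+1) *: y m.+1
  = (q ^+ m.+1 * qint q r.+1) *: y 0%N + qint q m.+1 *: y (m.+1 + r.+1)%N.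
Proof.
move=> hy; rewrite (hy m.+1) ?(hy (m.+1 + r.+1)%N) ?leq_addr // qintD.
move: (y 0%N) (qint q m.+1) (q ^+ m.+1 * qint q r.+1) => y0 Qm Qr.
rewrite !scalerDr !scalerDl !scalerA scalerDr !scalerA.
by rewrite [Qr * Qm]mulrC [in RHS]addrCA [in RHS]addrA.
Qed.

Lemma uI_nat (R : nzRingType) (u : int -> R) (a : int) (n : nat) :
  uI u a (a + n%:Z) = \prod_(t < n.+1) u (a + t%:Z).
Proof. by rewrite /uI; have -> : `|(a + n%:Z - a + 1)%R|%N = n.+1 by lia. Qed.

Section KlyachkoProducts.
Variables (k : fieldType) (q : k) (A : comAlgType k) (u : int -> A) (a : int) (n : nat).

Let P : A := uI u a (a + n%:Z).

Let x (t : nat) : A := P * u (a + t%:Z - 1).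

Lemma x_first : x 0%N = uI u (a - 1) (a + n%:Z).
Proof.
rewrite /x /uI; have -> : `|(a + n%:Z - (a - 1) + 1)%R|%N = n.+2 by lia.
rewrite big_ord_recl /P uI_nat mulrC; congr (_ * _).
  by congr (u _); rewrite /=; lia.
by apply: eq_bigr => j _; congr (u _); rewrite lift0 /=; lia.
Qed.

Lemma x_last : x n.+2 = uI u a (a + n%:Z + 1).
Proof.
have -> : a + n%:Z + 1 = a + (n.+1)%:Z by lia.
by rewrite /x uI_nat big_ord_recr /P uI_nat /=; congr (_ * u _); lia.
Qed.

Lemma x_middle (m : nat) : x m.+1 = u (a + m%:Z) * P.
Proof. by rewrite /x mulrC; congr (u _ * _); lia. Qed.

Lemma factor_of_P (t : nat) : (t <= n)%N -> exists P', P = u (a + t%:Z) * P'.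
Proof.
move=> ht; have ht' : (t < n.+1)%N by lia.
exists (\prod_(j < n.+1 | j != Ordinal ht') u (a + j%:Z)).
by rewrite /P uI_nat (bigD1 (Ordinal ht')).
Qed.

(* Multiplying the relation at a+t by P / u_{a+t} gives the recurrence for x. *)
Lemma x_recurrence (t : nat) : (t <= n)%N -> klyachko_rel q u (a + t%:Z) ->
  (q + 1) *: x t.+1 = q *: x t + x t.+2.
Proof.
move=> ht; rewrite /klyachko_rel expr2 => rel.
have [P' hP] := factor_of_P t ht; rewrite /x hP.
have -> : a + (t.+1)%:Z - 1 = a + t%:Z by lia.
have -> : a + (t.+2)%:Z - 1 = a + t%:Z + 1 by lia.
have regroup w : u (a + t%:Z) * P' * w = P' * (u (a + t%:Z) * w).
  by rewrite [_ * P']mulrC mulrA.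
by rewrite !scalerAr in rel; rewrite !regroup !scalerAr -mulrDr rel.
Qed.

Lemma klyachko_interval (m : nat) : (m <= n)%N ->
  (forall t, (t <= n)%N -> klyachko_rel q u (a + t%:Z)) ->
  qint q n.+2 *: (u (a + m%:Z) * P)
  = (q ^+ m.+1 * qint q (n - m).+1) *: uI u (a - 1) (a + n%:Z)
    + qint q m.+1 *: uI u a (a + n%:Z + 1).
Proof.
move=> hmn hrel.
have rec t (ht : (t <= n)%N) := x_recurrence t ht (hrel t ht).
rewrite -x_middle -x_first -x_last.
have -> : n.+2 = (m.+1 + (n - m).+1)%N by lia.
apply: (@qaffine_three_point _ _ q x (x 1%N - x 0%N)) => t ht.
by apply: (@qaffine_closed _ _ q x n rec); lia.
Qed.

End KlyachkoProducts.

Theorem mainTheorem1 (k : fieldType) (q : k)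
  (hchar : [pchar k] =i pred0)
  (hq : forall n : nat, (0 < n)%N -> q ^+ n = 1 -> q = 1)
  (A : comAlgType k) (u : int -> A) (a b i : int)
  (hab : a <= b) (hai : a <= i) (hib : i <= b)
  (hrel : forall j : int, a <= j <= b -> klyachko_rel q u j) :
  qint q `|(b - a + 2)%R|%N *: (u i * uI u a b)
  = (q ^+ `|(i - a + 1)%R|%N * qint q `|(b - i + 1)%R|%N) *: uI u (a - 1) b
    + qint q `|(i - a + 1)%R|%N *: uI u a (b + 1).
Proof.
have [n hb] : exists n : nat, b = a + n%:Z by exists `|b - a|%N; lia.
have [m hi] : exists m : nat, i = a + m%:Z by exists `|i - a|%N; lia.
subst b i.
have -> : `|(a + n%:Z - a + 2)%R|%N = n.+2 by lia.
have -> : `|(a + m%:Z - a + 1)%R|%N = m.+1 by lia.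
have -> : `|(a + n%:Z - (a + m%:Z) + 1)%R|%N = (n - m).+1 by lia.
apply: klyachko_interval; first lia.
by move=> t ht; apply: hrel; apply/andP; split; lia.
Qed.
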